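(* Let $x_0\in\mathcal{M}_0$ and let $r>0$ with $r<\lambda(x)$. Then $u^{-1}\big(\mathcal{M}\cap\bar B(x,r)\big)$ is connected.
   Context: $E=\mathbb{R}^n$. $\mathcal{M}_0$ is a compact $d$-dimensional $\mathcal{C}^2$ manifold, $u:\mathcal{M}_0\to E$ an immersion, $\mathcal{M}=u(\mathcal{M}_0)$; $\mathcal{M}_0$ carries the metric induced by $u$, whose second fundamental form has operator norm at most $\rho>0$ everywhere. For $x_0,y_0\in\mathcal{M}_0$ write $x=u(x_0)$, $y=u(y_0)$ and $T_y\mathcal{M}=d_{y_0}u(T_{y_0}\mathcal{M}_0)$. Normal reach: $\Lambda(x_0)=\{y_0\in\mathcal{M}_0:\ y_0\neq x_0,\ x-y\perp T_y\mathcal{M}\}$ and $\lambda_0(x_0)=\inf_{y_0\in\Lambda(x_0)}\|x-y\|$; one writes $\lambda(x)$ for $\lambda_0(x_0)$ (if $x$ has several preimages, every preimage has normal reach $0$). $\bar B(x,r)$ is the closed Euclidean ball. *)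

From HB Require Import structures.
From mathcomp Require Import all_boot all_order all_algebra.
From mathcomp Require Import all_classical all_reals all_analysis.
Import Order.TTheory GRing.Theory Num.Theory.
Import numFieldNormedType.Exports.
Local Open Scope classical_set_scope.
Local Open Scope ring_scope.
Set Implicit Arguments.
Unset Strict Implicit.
Unset Printing Implicit Defensive.

(* Euclidean inner product and Euclidean norm on R^n = 'rV[R]_n
   (MathComp's built-in norm on matrices is the max norm, which only
   serves as the (equivalent) topology for derivatives). *)
Definition edot (R : realType) (n : nat) (a b : 'rV[R]_n) : R :=
  (a *m b^T) ord0 ord0.
Definition enorm (R : realType) (n : nat) (a : 'rV[R]_n) : R :=
  Num.sqrt (edot a a).

Definition cball (R : realType) (n : nat) (x : 'rV[R]_n) (r : R)
  : set 'rV[R]_n := [set y | enorm (y - x) <= r].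

Definition C2_on (R : realType) (d n : nat) (V : set 'rV[R]_d)
    (f : 'rV[R]_d -> 'rV[R]_n) : Prop :=
  (forall z, V z -> f @ z --> f z) /\
  (forall z v, V z -> derivable f z v) /\
  (forall z v w, V z -> derivable ('D_v f) z w) /\
  (forall z v w, V z -> 'D_w ('D_v f) @ z --> 'D_w ('D_v f) z).

Definition C2_atlas (R : realType) (d : nat) (M0 : topologicalType)
    (I : Type) (U : I -> set M0) (phi : I -> M0 -> 'rV[R]_d)
    (psi : I -> 'rV[R]_d -> M0) : Prop :=
  (forall i, open (U i)) /\
  (forall p, exists i, U i p) /\
  (forall i, open (phi i @` U i)) /\
  (forall i p, U i p -> psi i (phi i p) = p) /\
  (forall i p, U i p -> phi i @ p --> phi i p) /\
  (forall i z, (phi i @` U i) z -> psi i @ z --> psi i z) /\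
  (forall i j, C2_on (phi i @` (U i `&` U j)) (phi j \o psi i)).

Definition C2_immersion (R : realType) (d n : nat) (M0 : topologicalType)
    (I : Type) (U : I -> set M0) (phi : I -> M0 -> 'rV[R]_d)
    (psi : I -> 'rV[R]_d -> M0) (u : M0 -> 'rV[R]_n) : Prop :=
  forall i, C2_on (phi i @` U i) (u \o psi i) /\
    (forall z v, (phi i @` U i) z -> 'D_v (u \o psi i) z = 0 -> v = 0).

(* T_y M = d_{y0}u (T_{y0} M0), computed in any chart around y0. *)
Definition tangent (R : realType) (d n : nat) (M0 : topologicalType)
    (I : Type) (U : I -> set M0) (phi : I -> M0 -> 'rV[R]_d)
    (psi : I -> 'rV[R]_d -> M0) (u : M0 -> 'rV[R]_n) (y0 : M0)
    : set 'rV[R]_n :=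
  [set w | exists i v, U i y0 /\ w = 'D_v (u \o psi i) (phi i y0)].

(* The second fundamental form of the metric induced by u has operator
   norm <= rho: in a chart, II(v,w) is the normal component of
   D^2(u o psi)(v,w), and |v|_g = |D(u o psi) v|. *)
Definition sff_bounded (R : realType) (d n : nat) (M0 : topologicalType)
    (I : Type) (U : I -> set M0) (phi : I -> M0 -> 'rV[R]_d)
    (psi : I -> 'rV[R]_d -> M0) (u : M0 -> 'rV[R]_n) (rho : R) : Prop :=
  forall i p v w t, U i p ->
    (exists v', t = 'D_v' (u \o psi i) (phi i p)) ->
    (forall v', edot ('D_w ('D_v (u \o psi i)) (phi i p) - t)
                     ('D_v' (u \o psi i) (phi i p)) = 0) ->
    enorm ('D_w ('D_v (u \o psi i)) (phi i p) - t)
      <= rho * enorm ('D_v (u \o psi i) (phi i p))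
             * enorm ('D_w (u \o psi i) (phi i p)).

Definition Lambda (R : realType) (d n : nat) (M0 : topologicalType)
    (I : Type) (U : I -> set M0) (phi : I -> M0 -> 'rV[R]_d)
    (psi : I -> 'rV[R]_d -> M0) (u : M0 -> 'rV[R]_n) (x0 : M0) : set M0 :=
  [set y0 | y0 <> x0 /\
     forall w, tangent U phi psi u y0 w -> edot (u x0 - u y0) w = 0].

(* normal reach lambda_0(x0) = inf over Lambda(x0) of |x - y|  (+oo if empty) *)
Definition normal_reach (R : realType) (d n : nat) (M0 : topologicalType)
    (I : Type) (U : I -> set M0) (phi : I -> M0 -> 'rV[R]_d)
    (psi : I -> 'rV[R]_d -> M0) (u : M0 -> 'rV[R]_n) (x0 : M0) : \bar R :=
  ereal_inf [set (enorm (u x0 - u y0))%:E | y0 in Lambda U phi psi u x0].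

(* Suppose S = u^-1(B(x, r)) splits: some nonempty relatively clopen part D
   of S misses x0.  D is compact, so q |-> |u q - x| attains its minimum on D
   at some b; as D is open in S and points outside S are farther than r from
   x, b is even a local minimum of this distance on M0.  The first-order
   condition at b says that x - u b is orthogonal to T_{u b} M, so b lies in
   Lambda(x0) and lambda(x) <= |x - u b| <= r, a contradiction.  Only the
   continuity and differentiability of u enter. *)

From HB Require Import structures.
From mathcomp Require Import all_boot all_order all_algebra.
From mathcomp Require Import all_classical all_reals all_analysis.
From mathcomp Require Import ring.
Import Order.TTheory GRing.Theory Num.Theory.
Import numFieldNormedType.Exports.
Local Open Scope classical_set_scope.
Local Open Scope ring_scope.
Set Implicit Arguments.
Unset Strict Implicit.

Section Euclidean.
Variables (R : realType) (n : nat).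
Implicit Types a b : 'rV[R]_n.

Lemma edotE a b : edot a b = \sum_(j < n) a ord0 j * b ord0 j.
Proof. by rewrite /edot mxE; apply: eq_bigr => j _; rewrite mxE. Qed.

Lemma edot_ge0 a : 0 <= edot a a.
Proof. by rewrite edotE; apply: sumr_ge0 => j _; rewrite -expr2 sqr_ge0. Qed.

Lemma edotNl a b : edot (- a) b = - edot a b.
Proof. by rewrite !edotE -sumrN; apply: eq_bigr => j _; rewrite mxE mulNr. Qed.

Lemma edotDZ a b (t : R) :
  edot (a + t *: b) (a + t *: b) = edot a a + t * (2 * edot a b + t * edot b b).
Proof.
rewrite !edotE !mulr_sumr -big_split mulr_sumr -big_split /=.
by apply: eq_bigr => j _; rewrite !mxE; ring.
Qed.

Lemma enorm_distC a b : enorm (a - b) = enorm (b - a).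
Proof.
rewrite /enorm -opprB; congr Num.sqrt.
by rewrite !edotE; apply: eq_bigr => j _; rewrite mxE mulNr mulrN opprK.
Qed.

Lemma cvg_edot (T : Type) (F : set_system T) {FF : Filter F}
    (f g : T -> 'rV[R]_n) a b :
  f @ F --> a -> g @ F --> b -> (fun x => edot (f x) (g x)) @ F --> edot a b.
Proof.
move=> fa gb; rewrite edotE; under eq_fun do rewrite edotE.
apply: (@cvg_big _ _ +%R 0 xpredT) => //; first exact: add_continuous.
move=> j _; apply: cvgM.
- exact: cvg_comp fa (@coord_continuous _ 1 n ord0 j a).
- exact: cvg_comp gb (@coord_continuous _ 1 n ord0 j b).
Qed.

Lemma enorm_continuous : continuous (@enorm R n).
Proof.
move=> a; have edot_cont : {for a, continuous (fun b => edot b b)}.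
  exact: (@cvg_edot _ _ (nbhs_filter a) id id a a cvg_id cvg_id).
exact: continuous_comp edot_cont (@sqrt_continuous R _).
Qed.

End Euclidean.

Lemma dnbhs0_cvg_eq0 (R : realType) (k : R -> R) (l : R) :
  k @ 0^' --> l -> (\forall h \near 0^', 0 <= h * k h) -> l = 0.
Proof.
move=> kl hk.
have right_le : at_right (0 : R) `=>` 0^' by apply: within_subset => h /gt_eqF ->.
have left_le : at_left (0 : R) `=>` 0^' by apply: within_subset => h /lt_eqF ->.
apply/eqP; rewrite eq_le; apply/andP; split.
- apply: (cvgr_to_le (F := at_left 0) (cvg_trans (cvg_app k left_le) kl)).
  near=> h; have h0 : h < 0 by near: h; exact: nbhs_left_lt.
  by rewrite -(nmulr_rge0 _ h0); near: h; exact: left_le.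
- apply: (cvgr_to_ge (F := at_right 0) (cvg_trans (cvg_app k right_le) kl)).
  near=> h; have h0 : 0 < h by near: h; exact: nbhs_right_gt.
  by rewrite -(pmulr_rge0 _ h0); near: h; exact: right_le.
Unshelve. all: by end_near. Qed.

Lemma edot_derive_eq0_of_local_min (R : realType) (V : normedModType R) (n : nat)
    (G : V -> 'rV[R]_n) (z v : V) (c : 'rV[R]_n) :
  derivable G z v ->
  (\forall h \near 0, enorm (G z - c) <= enorm (G (h *: v + z) - c)) ->
  edot (G z - c) ('D_v G z) = 0.
Proof.
move=> dG Gmin; set w := G z - c; set D := 'D_v G z.
set q := fun h : R => h^-1 *: (G (h *: v + z) - G z).
have qD : q @ 0^' --> D := dG.
(* [h * k h = |w + h q h|^2 - |w|^2], which is nonnegative by minimality *)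
pose k h := 2 * edot w (q h) + h * edot (q h) (q h).
have kD : k @ 0^' --> 2 * edot w D + 0 * edot D D.
  apply: cvgD; apply: cvgM.
  - exact: cvg_cst.
  - by apply: cvg_edot qD; exact: cvg_cst.
  - exact: cvg_within.
  - exact: cvg_edot.
suff : 2 * edot w D + 0 * edot D D = 0.
  by rewrite mul0r addr0 => /eqP; rewrite mulf_eq0 pnatr_eq0 => /eqP.
apply: (dnbhs0_cvg_eq0 kD); near=> h.
have h0 : h != 0 by near: h; exact: nbhs_dnbhs_neq.
have Gh : w + h *: q h = G (h *: v + z) - c.
  by rewrite /q scalerA mulfV // scale1r /w addrC addrA subrK.
have : enorm w <= enorm (w + h *: q h).
  rewrite Gh; near: h; apply: nbhs_dnbhs; exact: Gmin.
by rewrite /enorm ler_sqrt ?edot_ge0 // edotDZ lerDl.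
Unshelve. all: by end_near. Qed.

Lemma connected_clopen_mem (T : topologicalType) (S : set T) (x : T) :
  (forall D, D !=set0 -> (exists2 C, open C & D = S `&` C) ->
     (exists2 C, closed C & D = S `&` C) -> D x) ->
  connected S.
Proof.
move=> clopen_mem B B0 [C1 oC1 BC1] [C2 cC2 BC2].
have Bx : B x by apply: clopen_mem => //; [exists C1 | exists C2].
apply/seteqP; split; first by rewrite BC1 => q [].
rewrite -setD_eq0; apply/eqP/negPn/negP => /set0P SB0.
suff [_ []] : (S `\` B) x by [].
apply: clopen_mem SB0 _ _.
- by exists (~` C2); rewrite ?openC // BC2 setDE setCI setIUr setICr set0U.
- by exists (~` C1); rewrite ?closedC // BC1 setDE setCI setIUr setICr set0U.
Qed.

Lemma sublevelI_min (T : topologicalType) (R : realType) (g : T -> R) (r : R)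
    (C D : set T) :
  compact [set: T] -> continuous g -> D !=set0 -> closed D ->
  D = g @^-1` [set t | t <= r] `&` C -> exists2 b, D b & forall q, C q -> g b <= g q.
Proof.
move=> cT g_cont D0 cD DC.
have cD' : compact D by apply: subclosed_compact cD cT _.
have [b /set_mem Db bmin] := compact_EVT_min D0 cD' (continuous_subspaceT g_cont).
exists b => // q Cq; have [gqr|rgq] := leP (g q) r.
  by apply: bmin; rewrite inE DC.
by apply/ltW/(le_lt_trans _ rgq); move: Db; rewrite DC => -[].
Qed.

Section Immersion.
Variables (R : realType) (d n : nat) (M0 : topologicalType) (I : Type).
Variables (U : I -> set M0) (phi : I -> M0 -> 'rV[R]_d).
Variables (psi : I -> 'rV[R]_d -> M0) (u : M0 -> 'rV[R]_n).
Hypotheses (atlas : C2_atlas U phi psi) (imm : C2_immersion U phi psi u).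

Lemma immersion_continuous : continuous u.
Proof.
have [oU [cov [_ [psiphi [phic _]]]]] := atlas.
move=> p; have [i Uip] := cov p.
have Gc : {for phi i p, continuous (u \o psi i)}.
  by have [[+ _] _] := imm i; apply; exists p.
suff: (u \o psi i \o phi i) @ p --> u p.
  apply: cvg_trans; apply: near_eq_cvg; near=> q; rewrite /= psiphi //.
  by near: q; apply: open_nbhs_nbhs.
have -> : u p = (u \o psi i \o phi i) p by rewrite /= psiphi.
exact: continuous_comp (phic i p Uip) Gc.
Unshelve. all: by end_near. Qed.

Lemma Lambda_of_local_min (x0 b : M0) (C : set M0) :
  b <> x0 -> open C -> C b ->
  (forall q, C q -> enorm (u b - u x0) <= enorm (u q - u x0)) ->
  Lambda U phi psi u x0 b.
Proof.
have [oU [_ [_ [psiphi [_ [psic _]]]]]] := atlas.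
move=> b_x0 oC Cb bmin; split => // _ [i [v [Uib ->]]].
set z := phi i b.
have Uz : (phi i @` U i) z by exists b.
have Gz : (u \o psi i) z = u b by rewrite /= psiphi.
have C_psi : \forall y \near z, C (psi i y).
  by apply: psic Uz _ _; rewrite psiphi //; apply: open_nbhs_nbhs.
have line : (fun h : R => h *: v + z) @ 0 --> z.
  rewrite -{2}[z]add0r -[X in X + z](scale0r v).
  by apply: cvgD; [apply: cvgZ; [exact: cvg_id | exact: cvg_cst] | exact: cvg_cst].
rewrite -opprB edotNl -Gz edot_derive_eq0_of_local_min ?oppr0 //.
  by have [[_ [Gder _]] _] := imm i; exact: Gder.
near=> h; rewrite Gz /=; apply: bmin; near: h; exact: line _ C_psi.
Unshelve. all: by end_near. Qed.

End Immersion.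

Theorem lemma2p6 (R : realType) (d n : nat) (M0 : topologicalType)
    (I : Type) (U : I -> set M0) (phi : I -> M0 -> 'rV[R]_d)
    (psi : I -> 'rV[R]_d -> M0) (u : M0 -> 'rV[R]_n) (rho : R) :
  hausdorff_space M0 -> compact [set: M0] ->
  C2_atlas U phi psi -> C2_immersion U phi psi u ->
  0 < rho -> sff_bounded U phi psi u rho ->
  forall (x0 : M0) (r : R), 0 < r ->
    (r%:E < normal_reach U phi psi u x0)%E ->
    connected (u @^-1` cball (u x0) r).
Proof.
move=> _ compactM atlas imm _ _ x0 r _ r_lt_reach.
pose g q := enorm (u q - u x0).
have g_cont : continuous g.
  move=> q; have uq_cont : {for q, continuous (fun q => u q - u x0)}.
    by apply: cvgB; [exact: (immersion_continuous atlas imm) | exact: cvg_cst].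
  exact: (continuous_comp uq_cont (@enorm_continuous R n _)).
have Sg : u @^-1` cball (u x0) r = g @^-1` [set t | t <= r] by [].
have S_closed : closed (g @^-1` [set t | t <= r]).
  by apply: preimage_closed; [move=> ? _; exact: g_cont | exact: closed_le].
apply: (connected_clopen_mem (x := x0)) => D D0 [C1 oC1 DC1] [C2 cC2 DC2].
rewrite Sg in DC1 DC2; apply: contrapT => D_x0.
have D_closed : closed D by rewrite DC2; exact: closedI.
have [b Db bmin] := sublevelI_min compactM g_cont D0 D_closed DC1.
have [Sb C1b] : g b <= r /\ C1 b by move: Db; rewrite DC1.
have b_x0 : b <> x0 by move=> eb; apply: D_x0; rewrite -eb.
have Lb := Lambda_of_local_min atlas imm b_x0 oC1 C1b bmin.
have : (normal_reach U phi psi u x0 <= (enorm (u x0 - u b))%:E)%E.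
  by apply: ereal_inf_lbound; exists b.
by move=> /(lt_le_trans r_lt_reach); rewrite lte_fin enorm_distC ltNge Sb.
Qed.
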